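(* Let $m\in\mathbb{N}$ and $\rho\in[2,m-1]$. Then $$t_\rho(\mathbb{Z}_m)=\left\lfloor\frac{m-2}{\rho-1}\right\rfloor+1,\qquad s_\rho(\mathbb{Z}_m)=\max\left\{\frac md\left(\left\lfloor\frac{d-2}{\rho-1}\right\rfloor+1\right): d\mid m,\ d\ge\rho+1\right\}.$$
   Context: Groups are written additively; $\mathbb{Z}_m=\mathbb{Z}/m\mathbb{Z}$. For $A\subseteq G$ let $A_0:=A\cup\{0\}$ and $\langle A\rangle^+_\rho:=\rho A_0=\{a_1+\dots+a_\rho:a_i\in A_0\}$. $\operatorname{diam}^+_A(G):=\min\{\rho\in\mathbb{N}_0:\langle A\rangle^+_\rho=G\}$ ($\min\varnothing=\infty$). The period of $S\subseteq G$ is $\pi(S):=\{g\in G:S+g=S\}$; $S$ is aperiodic if $\pi(S)=\{0\}$. A subset $A\subseteq G$ is $\rho$-maximal if it is maximal under inclusion subject to $\operatorname{diam}^+_A(G)\ge\rho$, i.e. subject to $\langle A\rangle^+_{\rho-1}\neq G$. With the convention $\max\varnothing=0$: $s_\rho(G):=\max\{|A|: A\subseteq G,\ \rho\le\operatorname{diam}^+_A(G)<\infty\}$ and $t_\rho(G):=\max\{|A|: A \text{ is an aperiodic } \rho\text{-maximal generating set for } G\}$. *)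

From HB Require Import structures.
From mathcomp Require Import all_boot all_order all_algebra all_fingroup.
From Stdlib Require Import ClassicalEpsilon.
Set Implicit Arguments. Unset Strict Implicit. Unset Printing Implicit Defensive.
Import GRing.Theory.

Section Defs.
Variable m : nat.
Local Notation G := 'Z_m.

Definition A0 (A : {set G}) : {set G} := A :|: [set 0%R].

Definition sumset (S T : {set G}) : {set G} := [set (x + y)%R | x in S, y in T].

Definition rsum (A : {set G}) (rho : nat) : {set G} :=
  iter rho (fun S => sumset S (A0 A)) [set 0%R].

(* diam^+_A(G) >= rho, where diam = min {rho | <A>_rho = G}, min ∅ = ∞ *)
Definition diam_ge (A : {set G}) (rho : nat) : bool :=
  [forall n : 'I_rho, rsum A n != [set: G]].

Definition diam_fin (A : {set G}) : Prop := exists n, rsum A n = [set: G].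

Definition diam_finb (A : {set G}) : bool :=
  if excluded_middle_informative (diam_fin A) then true else false.

Definition period (S : {set G}) : {set G} :=
  [set g | [set (x + g)%R | x in S] == S].

Definition aperiodic (S : {set G}) : bool := period S == [set 0%R].

Definition rho_maximal (rho : nat) (A : {set G}) : bool :=
  maxset (fun B => diam_ge B rho) A.

Definition generating (A : {set G}) : bool := (<<A>>%g == [set: G]).

(* s_rho(G) = max{|A| : rho <= diam < ∞}, max ∅ = 0 *)
Definition s_rho (rho : nat) : nat :=
  \max_(A : {set G} | diam_ge A rho && diam_finb A) #|A|.

Definition t_rho (rho : nat) : nat :=
  \max_(A : {set G} | [&& aperiodic A, rho_maximal rho A & generating A]) #|A|.
End Defs.

(* Kneser's inequality |A| + |B| <= |A + B| + |stab (A + B)|, proved by induction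
   on |B| through Dyson e-transforms, applied along the chain of sumsets k A_0
   gives, for a rho-maximal B and P := stab ((rho - 1) B),
     1 + (rho - 1) |B| <= |(rho - 1) B| + (rho - 1) |P|,
   while maximality forces B + P = B. Hence |P| divides |B|, |(rho - 1) B| and m,
   and dividing by |P| yields both upper bounds with d = m / |P|. They are attained
   by the sets {x | x mod d < k}, k = (d - 2) / (rho - 1) + 1; for d = m every
   rho-maximal superset is aperiodic, because its (rho - 1)-fold sumset contains
   an interval of more than m / 2 elements but is not all of Z_m. *)

From mathcomp Require Import all_boot all_order all_algebra all_fingroup zify.
From Stdlib Require Import ClassicalEpsilon.
Set Implicit Arguments. Unset Strict Implicit. Unset Printing Implicit Defensive.
Import GRing.Theory.

Section Stabilizer.
Variable V : finZmodType.
Local Open Scope ring_scope.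
Implicit Types (A B S T X Y : {set V}) (g h x y z : V).

Definition shift S g := [set x + g | x in S].
Definition addset S T := [set x + y | x in S, y in T].
Definition stab S := [set g | shift S g == S].
Definition weight S := (#|S| + #|stab S|)%N.

Lemma card_shift S g : #|shift S g| = #|S|.
Proof. by rewrite card_imset //; apply: addIr. Qed.

Lemma mem_shift S g x : (x \in shift S g) = (x - g \in S).
Proof.
apply/imsetP/idP => [[y yS ->]|xS]; first by rewrite addrK.
by exists (x - g) => //; rewrite subrK.
Qed.

Lemma stabP S g : reflect (forall x, x \in S -> x + g \in S) (g \in stab S).
Proof.
rewrite inE; apply: (iffP idP) => [/eqP E x xS|H].
  by rewrite -E; apply/imsetP; exists x.
rewrite eqEcard card_shift leqnn andbT; apply/subsetP => y /imsetP[x xS ->].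
exact: H.
Qed.

Lemma stab_addr S g x : g \in stab S -> x \in S -> x + g \in S.
Proof. by move/stabP; apply. Qed.

Lemma stab0 S : 0 \in stab S.
Proof. by apply/stabP => x; rewrite addr0. Qed.

Lemma stabD S g h : g \in stab S -> h \in stab S -> g + h \in stab S.
Proof. by move=> gS hS; apply/stabP => x xS; rewrite addrA !stab_addr. Qed.

Lemma stabN S g : g \in stab S -> - g \in stab S.
Proof.
rewrite inE => /eqP gS; apply/stabP => x.
by rewrite -{1}gS mem_shift.
Qed.

Lemma stabB S g h : g \in stab S -> h \in stab S -> g - h \in stab S.
Proof. by move=> gS hS; rewrite stabD ?stabN. Qed.

Lemma stab_subr S g x : g \in stab S -> x \in S -> x - g \in S.
Proof. by move/stabN; apply: stab_addr. Qed.

Lemma stab_addr_notin S g x : g \in stab S -> x \notin S -> x + g \notin S.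
Proof. by move=> gS; apply: contra => /(stab_subr gS); rewrite addrK. Qed.

Lemma stab_addsetl S T : stab S \subset stab (addset S T).
Proof.
apply/subsetP => g gS; apply/stabP => _ /imset2P[x y xS yT ->].
by apply/imset2P; exists (x + g) y; rewrite ?stab_addr // addrAC.
Qed.

Lemma stab_addsetr S T : stab T \subset stab (addset S T).
Proof.
apply/subsetP => g gT; apply/stabP => _ /imset2P[x y xS yT ->].
by apply/imset2P; exists x (y + g); rewrite ?stab_addr // addrA.
Qed.

Definition cross S T z := [set s + t - z | s in S, t in T].

(* For s0 in S and t0 in T, the translates S + (t0 - z) and T + (s0 - z) lie in
   the cross set and meet inside a coset of stab X :&: stab Y. *)
Lemma card_cross X Y S T z :
  S \subset shift (stab X) z -> T \subset shift (stab Y) z ->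
  S != set0 -> T != set0 ->
  (#|S| + #|T| <= #|cross S T z| + #|stab X :&: stab Y|)%N.
Proof.
move=> sS sT /set0Pn[s0 s0S] /set0Pn[t0 t0T].
pose U1 := shift S (t0 - z); pose U2 := shift T (s0 - z).
have sU12 : U1 :|: U2 \subset cross S T z.
  rewrite subUset; apply/andP; split; apply/subsetP => _ /imsetP[u uS ->].
    by apply/imset2P; exists u t0; rewrite // addrA.
  by apply/imset2P; exists s0 u; rewrite // addrCA addrA.
have sI : U1 :&: U2 \subset shift (stab X :&: stab Y) (s0 + t0 - z).
  apply/subsetP => _ /setIP[/imsetP[s sS' ->] /imsetP[t tT Et]].
  have inX : s - s0 \in stab X.
    move: (subsetP sS s sS') (subsetP sS s0 s0S); rewrite !mem_shift => ss ss0.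
    by rewrite -[s - s0](subrKA z) -[z - s0]opprB; apply: stabB.
  have inY : t - t0 \in stab Y.
    move: (subsetP sT t tT) (subsetP sT t0 t0T); rewrite !mem_shift => tt tt0.
    by rewrite -[t - t0](subrKA z) -[z - t0]opprB; apply: stabB.
  have Es : s + (t0 - z) = s - s0 + (s0 + t0 - z) by rewrite -!addrA addKr.
  have Et' : t + (s0 - z) = t - t0 + (s0 + t0 - z).
    by rewrite (addrC s0 t0) -!addrA addKr.
  by rewrite mem_shift inE {2}Et Es Et' !addrK inX inY.
rewrite -(card_shift S (t0 - z)) -(card_shift T (s0 - z)) -cardsUI.
apply: leq_add; first exact: subset_leq_card.
by rewrite -(card_shift _ (s0 + t0 - z)); apply: subset_leq_card.
Qed.

Lemma cross_subset X Y S T z :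
  z \in X -> S \subset shift (stab X) z :\: Y -> T \subset shift (stab Y) z :&: X ->
  cross S T z \subset X :\: Y.
Proof.
move=> zX sS sT; apply/subsetP => _ /imset2P[s t sS' tT ->].
move: (subsetP sS s sS') (subsetP sT t tT).
rewrite !inE !mem_shift => /andP[sY sX] /andP[tY tX].
by rewrite -addrA stab_addr_notin //= addrCA stab_addr.
Qed.

(* With z := x + h in X :&: Y, split the cosets z + stab X and z + stab Y
   along Y and X; the cross sums of the smaller outer part with the other
   inner part land in X :\: Y (or Y :\: X), and card_cross bounds them. *)
Lemma card_stab_le_setD X Y x h :
  x \in X -> x \notin Y -> h \in stab X -> x + h \in Y ->
  (#|stab Y| <= #|X :\: Y| + #|stab X :&: stab Y|)%N \/
  (#|stab X| <= #|Y :\: X| + #|stab X :&: stab Y|)%N.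
Proof.
move=> xX xY hX zY; set z := x + h.
have zX : z \in X by apply: stab_addr.
set S := shift (stab X) z :\: Y; set T := shift (stab Y) z :&: X.
set S' := shift (stab Y) z :\: X; set T' := shift (stab X) z :&: Y.
have cS : (#|T'| + #|S| = #|stab X|)%N by rewrite cardsID card_shift.
have cS' : (#|T| + #|S'| = #|stab Y|)%N by rewrite cardsID card_shift.
have xS : x \in S by rewrite !inE xY mem_shift opprD addNKr stabN.
have zT : z \in T by rewrite !inE zX mem_shift subrr stab0.
have zT' : z \in T' by rewrite !inE zY mem_shift subrr stab0.
have [leS'S|ltSS'] := leqP #|S'| #|S|; [left|right].
  have S0 : S != set0 by apply/set0Pn; exists x.
  have T0 : T != set0 by apply/set0Pn; exists z.
  rewrite -cS' addnC; apply: leq_trans (leq_add leS'S (leqnn _)) _.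
  apply: leq_trans (card_cross (subsetDl _ _) (subsetIl _ _) S0 T0) _.
  by rewrite leq_add2r; apply/subset_leq_card/(cross_subset zX (subxx S) (subxx T)).
have S'0 : S' != set0 by rewrite -card_gt0 (leq_ltn_trans _ ltSS').
have T'0 : T' != set0 by apply/set0Pn; exists z.
rewrite -cS setIC addnC; apply: leq_trans (leq_add (ltnW ltSS') (leqnn _)) _.
apply: leq_trans (card_cross (subsetDl _ _) (subsetIl _ _) S'0 T'0) _.
by rewrite leq_add2r; apply/subset_leq_card/(cross_subset zY (subxx S') (subxx T')).
Qed.

Lemma weight_setU X Y : (minn (weight X) (weight Y) <= weight (X :|: Y))%N.
Proof.
have : (#|stab X :&: stab Y| <= #|stab (X :|: Y)|)%N.
  apply/subset_leq_card/subsetP => g /setIP[gX gY]; apply/stabP => u.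
  by case/setUP => ?; apply/setUP; [left|right]; apply: stab_addr.
have := cardsUI X Y; have := cardsID X Y; have := cardsID Y X.
rewrite /weight setIC; move: (X :&: Y) => I.
have [sXY|/subsetPn[x xX xY]] := boolP (X \subset Y).
  by rewrite (setUidPr sXY) geq_minr.
have [sYX|/subsetPn[y yY yX]] := boolP (Y \subset X).
  by rewrite (setUidPl sYX) geq_minl.
suff : (#|stab Y| <= #|X :\: Y| + #|stab X :&: stab Y|)%N \/
       (#|stab X| <= #|Y :\: X| + #|stab X :&: stab Y|)%N by lia.
have [/exists_inP[g gX xgY]|xX'] := boolP [exists g in stab X, x + g \in Y].
  exact: card_stab_le_setD xX xY gX xgY.
have [/exists_inP[g gY ygX]|yY'] := boolP [exists g in stab Y, y + g \in X].
  by have [|] := card_stab_le_setD yY yX gY ygX; rewrite setIC; [right|left].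
(* Otherwise the whole coset x + stab X lies in X :\: Y, and likewise for y. *)
have coset_sub (U W : {set V}) u : u \in U -> ~~ [exists g in stab U, u + g \in W] ->
    (#|stab U| <= #|U :\: W|)%N.
  move=> uU uW; rewrite -(card_shift _ u); apply/subset_leq_card/subsetP => w.
  rewrite mem_shift => wu; rewrite inE -{2}(subrK u w) addrC stab_addr // andbT.
  by apply: contra uW => wW; apply/exists_inP; exists (w - u); rewrite // addrC subrK.
have := coset_sub _ _ _ xX xX'; have := coset_sub _ _ _ yY yY'; lia.
Qed.

Lemma weight_bigcup (I : finType) (P : pred I) (F : I -> {set V}) n :
  (forall i, P i -> n <= weight (F i))%N ->
  \bigcup_(i | P i) F i != set0 -> (n <= weight (\bigcup_(i | P i) F i))%N.
Proof.
move=> Fn; apply/implyP; rewrite implybE negbK.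
apply: (big_ind (fun U => (U == set0) || (n <= weight U)%N)) => [||i /Fn->];
  rewrite ?eqxx ?orbT // => U1 U2.
move=> /orP[/eqP->|h1]; first by rewrite set0U.
move=> /orP[/eqP->|h2]; first by rewrite setU0 h1 orbT.
by rewrite (leq_trans _ (weight_setU U1 U2)) ?orbT // leq_min h1 h2.
Qed.

Lemma kneser_shift A B b : b \in B -> addset A B \subset shift A b ->
  (#|A| + #|B| <= weight (addset A B))%N.
Proof.
move=> bB sABb; have E : addset A B = shift A b.
  apply/eqP; rewrite eqEsubset sABb /=.
  by apply/subsetP => _ /imsetP[a aA ->]; apply/imset2P; exists a b.
rewrite /weight {1}E card_shift leq_add2l -(card_shift B (- b)).
apply/subset_leq_card/subsetP => _ /imsetP[b' b'B ->]; apply/stabP => w.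
rewrite {1}E mem_shift => wA; apply/imset2P; exists (w - b) b' => //.
by rewrite addrCA addrC.
Qed.

Definition dyson_union A B e := A :|: shift B e.
Definition dyson_inter A B e := [set y in B | y + e \in A].

Lemma card_dyson A B e :
  (#|dyson_union A B e| + #|dyson_inter A B e| = #|A| + #|B|)%N.
Proof.
have E : A :&: shift B e = shift (dyson_inter A B e) e.
  by apply/setP => w; rewrite inE !mem_shift inE subrK andbC.
by rewrite -(card_shift (dyson_inter A B e) e) -E cardsUI card_shift.
Qed.

Lemma addset_dyson A B e :
  addset (dyson_union A B e) (dyson_inter A B e) \subset addset A B.
Proof.
apply/subsetP => _ /imset2P[u v /setUP[uA|uB] /setIdP[vB vA] ->]; apply/imset2P.
  by exists u v.
by exists (v + e) (u - e); rewrite -?mem_shift // addrCA addrK.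
Qed.

Theorem kneser A B : A != set0 -> B != set0 ->
  (#|A| + #|B| <= weight (addset A B))%N.
Proof.
move: {2}#|B| (leqnn #|B|) => n; elim: n A B => [|n IH] A B.
  by rewrite leqn0 cards_eq0 => /eqP -> _; rewrite eqxx.
move=> leBn A0 B0.
have [/exists_inP[b bB] | ] := boolP [exists b in B, addset A B \subset shift A b].
  exact: kneser_shift.
rewrite negb_exists_in => /forall_inP noshift.
pose P e := (dyson_inter A B e != set0) && (dyson_inter A B e \proper B).
have E : addset A B =
    \bigcup_(e | P e) addset (dyson_union A B e) (dyson_inter A B e).
  apply/eqP; rewrite eqEsubset; apply/andP; split; last first.
    by apply/bigcupsP => e _; apply: addset_dyson.
  apply/subsetP => _ /imset2P[a b aA bB ->].
  have /subsetPn[_ /imset2P[a' b' a'A b'B ->]] := noshift b bB.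
  rewrite mem_shift => nAb.
  have bD : b \in dyson_inter A B (a' - b) by rewrite inE bB addrC subrK.
  apply/bigcupP; exists (a' - b).
    apply/andP; split; first by apply/set0Pn; exists b.
    rewrite properEneq; apply/andP; split; last by apply/subsetP => y /setIdP[].
    apply/eqP => DB; move: b'B; rewrite -DB inE => /andP[_].
    by rewrite addrCA addrA (negPf nAb).
  by apply/imset2P; exists a b; rewrite // inE aA.
rewrite E; apply: weight_bigcup => [e /andP[De /proper_card ltDB]|]; last first.
  rewrite -E; case/set0Pn: A0 => a aA; case/set0Pn: B0 => b bB.
  by apply/set0Pn; exists (a + b); apply/imset2P; exists a b.
rewrite -(card_dyson A B e); apply: IH => //; first by rewrite -ltnS (leq_trans ltDB).
by apply: contraNneq A0 => D0; rewrite -subset0 -D0 subsetUl.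
Qed.

Lemma dvdn_card_stab S X : stab S \subset stab X -> (#|stab S| %| #|X|)%N.
Proof.
move: {2}#|X| (leqnn #|X|) => n; elim: n X => [|n IH] X.
  by rewrite leqn0 cards_eq0 => /eqP -> _; rewrite cards0 dvdn0.
move=> leXn sSX; have [->|/set0Pn[x xX]] := eqVneq X set0.
  by rewrite cards0 dvdn0.
have sCX : shift (stab S) x \subset X.
  by apply/subsetP => _ /imsetP[g gS ->]; rewrite addrC stab_addr // (subsetP sSX).
have EX : #|X| = (#|X :\: shift (stab S) x| + #|stab S|)%N.
  by rewrite -(cardsID (shift (stab S) x) X) (setIidPr sCX) card_shift addnC.
rewrite EX dvdn_addl // IH //.
  have : (0 < #|stab S|)%N by rewrite card_gt0; apply/set0Pn; exists 0; apply: stab0.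
  by move: leXn; rewrite EX; lia.
apply/subsetP => g gS; apply/stabP => y /setDP[yX yC].
rewrite !inE (stab_addr (subsetP sSX g gS) yX) andbT.
by apply: contra yC; rewrite !mem_shift => /stabB/(_ gS); rewrite addrAC addrK.
Qed.

End Stabilizer.

Section CyclicSumsets.
Variable m : nat.
Local Notation G := 'Z_m.
Local Open Scope ring_scope.
Implicit Types (A B S : {set G}) (x g : G).

Lemma rsumS A n : rsum A n.+1 = addset (rsum A n) (A0 A). Proof. by []. Qed.

Lemma mem0_A0 A : 0 \in A0 A.
Proof. by rewrite !inE eqxx orbT. Qed.

Lemma mem0_rsum A n : 0 \in rsum A n.
Proof.
elim: n => [|n IH]; first by rewrite inE.
by rewrite rsumS; apply/imset2P; exists 0 0; rewrite ?mem0_A0 ?addr0.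
Qed.

Lemma subset_rsumS A n : rsum A n \subset rsum A n.+1.
Proof.
apply/subsetP => x xR; rewrite rsumS; apply/imset2P.
by exists x 0; rewrite ?mem0_A0 ?addr0.
Qed.

Lemma subset_rsum_r A n k : (n <= k)%N -> rsum A n \subset rsum A k.
Proof.
move/subnK <-; elim: (k - n)%N => [|j IH]; first by rewrite add0n.
exact: subset_trans IH (subset_rsumS _ _).
Qed.

Lemma subset_rsum_l A B n : A \subset B -> rsum A n \subset rsum B n.
Proof.
move=> sAB; elim: n => [|n IH]; first exact: subxx.
apply/subsetP => w; rewrite !rsumS => /imset2P[x y xR yA ->].
apply/imset2P; exists x y; rewrite ?(subsetP IH) //.
by apply: subsetP yA; apply: setSU.
Qed.

Lemma rsum_A0 A n : rsum (A0 A) n = rsum A n.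
Proof. by rewrite /rsum /A0 -setUA setUid. Qed.

Lemma subset_stab_rsum A n k : (n <= k)%N ->
  stab (rsum A n) \subset stab (rsum A k).
Proof.
move/subnK <-; elim: (k - n)%N => [|j IH]; first by rewrite add0n.
exact: subset_trans IH (stab_addsetl _ _).
Qed.

Lemma diam_geS A h : diam_ge A h.+1 = (rsum A h != setT).
Proof.
apply/forallP/idP => [/(_ ord_max)//|nRh i]; apply: contra nRh => /eqP Ri.
by rewrite eqEsubset subsetT -Ri subset_rsum_r // -ltnS.
Qed.

(* Kneser's inequality applied to each step rsum A i + A0 A, with all the
   stabilizers bounded by the last one. *)
Lemma card_rsum_lower A n k : (n <= k)%N ->
  (1 + n * #|A0 A| <= #|rsum A n| + n * #|stab (rsum A k)|)%N.
Proof.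
elim: n => [|n IH] lek; first by rewrite cards1.
have nR : rsum A n != set0 by apply/set0Pn; exists 0; apply: mem0_rsum.
have nA : A0 A != set0 by apply/set0Pn; exists 0; apply: mem0_A0.
have : (#|rsum A n| + #|A0 A| <= #|rsum A n.+1| + #|stab (rsum A n.+1)|)%N.
  exact: kneser nR nA.
have := subset_leq_card (subset_stab_rsum A lek).
have := IH (ltnW lek); rewrite !mulSn; lia.
Qed.

Lemma rsum_add_stab A S n :
  rsum (addset A (stab S)) n \subset addset (rsum A n) (stab S).
Proof.
elim: n => [|n IH].
  apply/subsetP => x /set1P ->.
  by apply/imset2P; exists 0 0; [apply: mem0_rsum | apply: stab0 | rewrite addr0].
apply/subsetP => w; rewrite rsumS => /imset2P[x y xR yA ->].
have /imset2P[x' p xR' pS ->] := subsetP IH x xR.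
have [y' y'A [q qS ->]] : exists2 y', y' \in A0 A & exists2 q, q \in stab S & y = y' + q.
  case/setUP: yA => [/imset2P[a q aA qS ->]|/set1P ->].
    by exists a; [rewrite inE aA | exists q].
  by exists 0; [apply: mem0_A0 | exists 0; rewrite ?stab0 ?addr0].
apply/imset2P; exists (x' + y') (p + q); last by rewrite addrACA.
  by rewrite rsumS; apply/imset2P; exists x' y'.
exact: stabD.
Qed.

Lemma rsum_sub_stab A S n : A \subset stab S -> rsum A n \subset stab S.
Proof.
move=> sA; elim: n => [|n IH]; first by rewrite sub1set stab0.
apply/subsetP => w; rewrite rsumS => /imset2P[x y xR yA ->].
apply: stabD; first exact: (subsetP IH).
by case/setUP: yA => [/(subsetP sA)|/set1P ->]; rewrite ?stab0.
Qed.

Lemma rho_maximal_exists h A :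
  diam_ge A h.+1 -> {B | rho_maximal h.+1 B & A \subset B}.
Proof. exact: (@maxset_exists _ (fun B : {set G} => diam_ge B h.+1)). Qed.

Lemma rho_maximal_A0 h B : rho_maximal h.+1 B -> A0 B = B.
Proof.
case/maxsetP => dB maxB; apply: maxB; last exact: subsetUl.
by rewrite diam_geS rsum_A0 -diam_geS.
Qed.

(* B + stab(hB) still has diameter > h, so maximality forces B + stab(hB) = B. *)
Lemma rho_maximal_stab h B :
  rho_maximal h.+1 B -> stab (rsum B h) \subset stab B.
Proof.
move=> mB; have [dB maxB] := maxsetP mB; set P := stab (rsum B h).
have sB : B \subset addset B P.
  by apply/subsetP => x xB; apply/imset2P; exists x 0; rewrite ?stab0 ?addr0.
have E : addset B P = B.
  apply: maxB sB; move: dB; rewrite !diam_geS; apply: contra => /eqP E.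
  rewrite eqEsubset subsetT -E /=.
  apply: subset_trans (rsum_add_stab _ _ _) _.
  by apply/subsetP => _ /imset2P[x p xR pP ->]; apply: stab_addr.
by apply/subsetP => g gP; apply/stabP => x xB; rewrite -E; apply/imset2P; exists x g.
Qed.

End CyclicSumsets.

Section Bounds.
Variable m : nat.
Hypothesis m1 : (1 < m)%N.
Local Notation G := 'Z_m.
Local Open Scope ring_scope.
Implicit Types (A B R S : {set G}) (x g : G).

Lemma card_Zp_setT : #|[set: G]| = m.
Proof. by rewrite cardsT card_ord Zp_cast. Qed.

Lemma card_lt_m S : S != setT -> (#|S| < m)%N.
Proof. by move=> nS; rewrite -[X in (_ < X)%N]card_Zp_setT proper_card ?properT. Qed.

Lemma card_aperiodic_rho_maximal h B : (0 < h)%N ->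
  rho_maximal h.+1 B -> aperiodic B -> (#|B| <= (m - 2) %/ h + 1)%N.
Proof.
move=> h0 mB /eqP aB.
have P1 : (#|stab (rsum B h)| <= 1)%N.
  by rewrite -(cards1 (0 : G)) -aB; apply/subset_leq_card/rho_maximal_stab.
have : (#|rsum B h| < m)%N by rewrite card_lt_m // -diam_geS (maxsetp mB).
have := card_rsum_lower B (leqnn h); rewrite (rho_maximal_A0 mB) => ? ?.
by rewrite addnC -leq_subLR leq_divRL //; nia.
Qed.

Lemma card_diam_ge_fin h A : (0 < h)%N -> diam_ge A h.+1 -> diam_fin A ->
  exists2 d, (d %| m)%N && (h.+2 <= d)%N &
    (#|A| <= m %/ d * ((d - 2) %/ h + 1))%N.
Proof.
move=> h0 dA [n0 Rn0].
have [B mB sAB] := rho_maximal_exists dA.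
set P := stab (rsum B h).
have sPB : P \subset stab B := rho_maximal_stab mB.
have nR : rsum B h != setT by rewrite -diam_geS (maxsetp mB).
have P0 : (0 < #|P|)%N by rewrite card_gt0; apply/set0Pn; exists 0; apply: stab0.
have ltPB : (#|P| < #|B|)%N.
  have B0 : 0 \in B by rewrite -(rho_maximal_A0 mB) mem0_A0.
  have sPB' : P \subset B.
    by apply/subsetP => g gP; rewrite -(add0r g) stab_addr ?(subsetP sPB).
  rewrite ltnNge; apply: contra nR => leBP.
  have EPB : P = B by apply/eqP; rewrite eqEcard sPB'.
  have : rsum A n0 \subset P.
    apply: subset_trans (subset_rsum_l n0 sAB) _.
    by apply: rsum_sub_stab; rewrite -/P EPB.
  rewrite Rn0 eqEsubset subsetT => sTP; apply/subsetP => g _.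
  by rewrite -(add0r g) stab_addr ?mem0_rsum ?(subsetP sTP) ?inE.
have [k EB] : exists k, #|B| = (k * #|P|)%N by apply/dvdnP/dvdn_card_stab.
have [r ER] : exists r, #|rsum B h| = (r * #|P|)%N by apply/dvdnP/dvdn_card_stab.
have [d Em] : exists d, m = (d * #|P|)%N.
  apply/dvdnP; rewrite -[X in (_ %| X)%N]card_Zp_setT; apply: dvdn_card_stab.
  by apply/subsetP => g _; apply/stabP => x; rewrite !inE.
have rd : (r < d)%N by rewrite -(ltn_pmul2r P0) -ER -Em card_lt_m.
have hk : (h * k < r + h)%N.
  rewrite -(ltn_pmul2r P0); have := card_rsum_lower B (leqnn h).
  by rewrite (rho_maximal_A0 mB) -/P EB ER; nia.
have k1 : (1 < k)%N by rewrite -(ltn_pmul2r P0) mul1n -EB.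
exists d; first by rewrite Em dvdn_mulr //=; nia.
have -> : (m %/ d = #|P|)%N by rewrite [X in (X %/ _)%N]Em mulKn //; nia.
apply: leq_trans (subset_leq_card sAB) _; rewrite EB mulnC leq_mul //.
by rewrite addnC -leq_subLR leq_divRL //; nia.
Qed.

Lemma val_natr i : val (i%:R : G) = (i %% m)%N.
Proof. exact: val_Zp_nat. Qed.

Lemma val_lt_m x : (val x < m)%N.
Proof. by have := ltn_ord x; rewrite [X in (_ < X)%N -> _](Zp_cast m1). Qed.

Lemma val_addr x y : val (x + y) = ((val x + val y) %% m)%N.
Proof. by rewrite -{1}[x]natr_Zp -{1}[y]natr_Zp -natrD val_natr. Qed.

Lemma natr_in_rsum A c n i : (forall r, r <= c -> r%:R \in A0 A)%N ->
  (i <= n * c)%N -> i%:R \in rsum A n.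
Proof.
move=> Ac; elim: n i => [|n IH] i.
  by rewrite mul0n leqn0 => /eqP ->; apply: mem0_rsum.
move=> le_i; rewrite rsumS; apply/imset2P.
have [le_ic|lt_ci] := leqP i c.
  by exists 0 i%:R; rewrite ?mem0_rsum ?Ac ?add0r.
exists (i - c)%:R c%:R; first (apply: IH; rewrite mulSn in le_i; lia).
  exact: Ac.
by rewrite -natrD subnK // ltnW.
Qed.

Definition band d k := [set x : G | (val x %% d < k)%N].

Lemma band_rsum_mod d k n x : (d %| m)%N -> x \in rsum (band d k) n ->
  (val x %% d <= n * (k - 1))%N.
Proof.
move=> dm; elim: n x => [|n IH] x; first by move/set1P ->; rewrite mod0n.
rewrite rsumS => /imset2P[y z yR zA ->].
rewrite val_addr modn_dvdm // -modnDm mulSnr.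
apply: leq_trans (leq_mod _ _) _; apply: leq_add; first exact: IH.
case/setUP: zA => [|/set1P ->]; last by rewrite mod0n.
by rewrite inE; lia.
Qed.

Lemma diam_ge_band h d : (0 < h)%N -> (d %| m)%N -> (h.+2 <= d)%N ->
  diam_ge (band d ((d - 2) %/ h + 1)) h.+1.
Proof.
move=> h0 dm hd; have dlem := dvdn_leq (ltnW m1) dm.
rewrite diam_geS; apply/eqP => E.
have : d.-1%:R \in rsum (band d ((d - 2) %/ h + 1)) h by rewrite E inE.
by move/(band_rsum_mod dm); rewrite val_natr !modn_small; lia.
Qed.

Lemma rsum_band_setT d k : (1 < d)%N -> (1 < k)%N -> rsum (band d k) m = setT.
Proof.
move=> d1 k1; apply/eqP; rewrite eqEsubset subsetT; apply/subsetP => x _.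
rewrite -[x]natr_Zp; apply: (@natr_in_rsum _ 1); last by rewrite muln1 ltnW ?val_lt_m.
case=> [|[|//]] _; first exact: mem0_A0.
by rewrite !inE -[1%R]mulr1n val_natr (modn_small m1) (modn_small d1) k1.
Qed.

Lemma card_band d k : (d %| m)%N -> (k <= d)%N -> #|band d k| = (m %/ d * k)%N.
Proof.
move=> dm kd; have d0 := dvdn_gt0 (ltnW m1) dm.
pose f (p : 'I_(m %/ d) * 'I_k) := ((p.1 * d + p.2)%N%:R : G).
have lt_m (p : 'I_(m %/ d) * 'I_k) : (p.1 * d + p.2 < m)%N.
  case: p => [[a ha] [b hb]] /=; rewrite -(divnK dm).
  apply: (@leq_trans (a.+1 * d)); last by rewrite leq_mul2r ha orbT.
  by rewrite mulSnr ltn_add2l; lia.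
have val_f p : val (f p) = (p.1 * d + p.2)%N by rewrite val_natr modn_small.
have f_inj : injective f.
  move=> [a b] [a' b'] /(congr1 val); rewrite !val_f /= => E.
  have lt_b : (b < d)%N by apply: leq_trans (ltn_ord b) kd.
  have lt_b' : (b' < d)%N by apply: leq_trans (ltn_ord b') kd.
  have Ea : a = a' :> nat.
    have := congr1 (divn^~ d) E.
    by rewrite /= !divnMDl // (divn_small lt_b) (divn_small lt_b') !addn0.
  have Eb : b = b' :> nat.
    have := congr1 (modn^~ d) E.
    by rewrite /= !modnMDl (modn_small lt_b) (modn_small lt_b').
  by congr pair; apply: val_inj.
suff -> : band d k = f @: setT by rewrite card_imset // cardsT card_prod !card_ord.
apply/setP => x; rewrite inE; apply/idP/imsetP => [xk|[p _ ->]].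
  have lt_q : (val x %/ d < m %/ d)%N by rewrite ltn_divLR // divnK // val_lt_m.
  by exists (Ordinal lt_q, Ordinal xk); rewrite // /f /= -divn_eq natr_Zp.
by rewrite val_f modnMDl modn_small // (leq_trans (ltn_ord _) kd).
Qed.

(* A set containing 0, 1, ..., L with 2L + 1 >= m and a nonzero period g
   is everything: choosing g or -g, the period is at most L + 1, so the
   initial segment keeps growing by it. *)
Lemma interval_stab_setT R L g : (m <= L.*2.+1)%N ->
  (forall i, i <= L -> i%:R \in R)%N -> g \in stab R -> g != 0 -> R = setT.
Proof.
move=> mL RL gR g0.
have vg0 : (0 < val g)%N.
  by rewrite lt0n; apply: contraNneq g0 => vg; apply/eqP/val_inj; rewrite vg.
have [g' [g'R v0 vL]] :
    exists g', [/\ g' \in stab R, (0 < val g')%N & (val g' <= L.+1)%N].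
  have [le_gL|lt_Lg] := leqP (val g) L.+1; first by exists g.
  have Eg : - g = (m - val g)%:R.
    apply: (addIr g); rewrite addNr -{2}[g]natr_Zp -natrD subnK ?pchar_Zp //.
    exact: ltnW (val_lt_m g).
  have := val_lt_m g; exists (- g).
  by rewrite stabN // Eg val_natr modn_small; [split=> //; lia | lia].
have grow n i : (i <= L + n * val g')%N -> i%:R \in R.
  elim: n i => [|n IH] i; first by rewrite addn0; apply: RL.
  have [le_i _|lt_i le_i] := leqP i (L + n * val g'); first exact: IH.
  rewrite -(subnK (_ : val g' <= i)%N) ?natrD ?natr_Zp; last by lia.
  by apply: stab_addr g'R _; apply: IH; rewrite mulSnr in le_i; lia.
apply/eqP; rewrite eqEsubset subsetT; apply/subsetP => x _.
have xm : (x < m)%N := val_lt_m x.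
by rewrite -[x]natr_Zp; apply: (grow m); nia.
Qed.

Lemma aperiodic_rho_maximal_witness h : (0 < h)%N -> (h.+2 <= m)%N ->
  exists2 B : {set G}, [&& aperiodic B, rho_maximal h.+1 B & generating B] &
    ((m - 2) %/ h + 1 <= #|B|)%N.
Proof.
move=> h0 hm; set k := ((m - 2) %/ h + 1)%N.
have km : (k <= m)%N by rewrite /k; nia.
have [B mB sIB] := rho_maximal_exists (diam_ge_band h0 (dvdnn m) hm).
have B0 := rho_maximal_A0 mB.
have bandB r : (r < k)%N -> r%:R \in B.
  by move=> lt_rk; apply: (subsetP sIB); rewrite inE val_natr !modn_small //; lia.
exists B; last first.
  by have := subset_leq_card sIB; rewrite card_band ?dvdnn // divnn (ltnW m1) mul1n.
rewrite mB /=; apply/andP; split; last first.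
  rewrite /generating eqEsubset subsetT Zp_cycle cycle_subG /=; apply: mem_gen.
  by apply: (bandB 1); rewrite /k; nia.
rewrite /aperiodic eqEsubset sub1set stab0 andbT; apply/subsetP => g gB.
rewrite inE; apply: contraTT (maxsetp mB) => g0; rewrite diam_geS negbK; apply/eqP.
have sBR : stab B \subset stab (rsum B h).
  by apply: subset_trans (subset_stab_rsum B h0); rewrite -{1}B0; apply: stab_addsetr.
apply: (@interval_stab_setT _ (h * (k - 1)) g); rewrite ?(subsetP sBR) //.
  by rewrite /k -mul2n; nia.
move=> i le_i; apply: (@natr_in_rsum _ (k - 1)) => // r le_rk.
by rewrite B0 bandB //; lia.
Qed.

End Bounds.

Lemma diam_finbP m (A : {set 'Z_m}) : reflect (diam_fin A) (diam_finb A).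
Proof. by rewrite /diam_finb; case: excluded_middle_informative => H; constructor. Qed.

Lemma t_rhoE m h : (0 < h)%N -> (h.+2 <= m)%N ->
  t_rho m h.+1 = ((m - 2) %/ h + 1)%N.
Proof.
move=> h0 hm; have m1 : (1 < m)%N by lia.
apply/eqP; rewrite eqn_leq; apply/andP; split.
  by apply/bigmax_leqP => B /and3P[aB mB _]; apply: card_aperiodic_rho_maximal.
have [B PB leB] := aperiodic_rho_maximal_witness m1 h0 hm.
by apply: leq_trans leB _; apply: leq_bigmax_cond.
Qed.

Lemma s_rhoE m h : (0 < h)%N -> (h.+2 <= m)%N ->
  s_rho m h.+1 =
    \max_(d < m.+1 | (d %| m) && (h.+2 <= d)) (m %/ d * ((d - 2) %/ h + 1)).
Proof.
move=> h0 hm; have m1 : (1 < m)%N by lia.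
apply/eqP; rewrite eqn_leq; apply/andP; split.
  apply/bigmax_leqP => A /andP[dA /diam_finbP fA].
  have [d dP leA] := card_diam_ge_fin m1 h0 dA fA.
  have ltdm : (d < m.+1)%N by rewrite ltnS dvdn_leq ?(ltnW m1) //; case/andP: dP.
  exact: leq_trans leA (leq_bigmax_cond (Ordinal ltdm) dP).
apply/bigmax_leqP => [[d /= ltdm]] /andP[dm hd].
have kd : ((d - 2) %/ h + 1 <= d)%N by nia.
rewrite -(card_band m1 dm kd); apply: leq_bigmax_cond.
rewrite diam_ge_band //=; apply/diam_finbP; exists m; apply: rsum_band_setT; lia.
Qed.

Theorem theorem2p5 (m rho : nat) (h2 : 2 <= rho) (hm : rho <= m - 1) :
  t_rho m rho = (m - 2) %/ (rho - 1) + 1 /\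
  s_rho m rho =
    \max_(d < m.+1 | (d %| m) && (rho + 1 <= d)) (m %/ d * ((d - 2) %/ (rho - 1) + 1)).
Proof.
case: rho h2 hm => // h h0 hm; rewrite subn1 [h.+1 + 1]addn1 /=.
by split; [apply: t_rhoE | apply: s_rhoE]; lia.
Qed.
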